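(* Let $P$ be a pseudotree and let $Z$ be a set of vertices such that $\alpha(P) > \alpha(P-Z)$. Then there exist three (possibly non-distinct) vertices $u,v,w \in Z \cap V(P)$ such that $\alpha(P) > \alpha(P-\{u,v,w\})$.
   Context: A pseudotree is a connected finite simple graph containing at most one cycle. $\alpha(H)$ denotes the maximum size of an independent set of a graph $H$. For a vertex set $S$, $P - S$ denotes the graph obtained from $P$ by deleting the vertices of $S\cap V(P)$ and their incident edges. *)

From mathcomp Require Import all_boot.
Set Implicit Arguments. Unset Strict Implicit. Unset Printing Implicit Defensive.

Section Graph.
Variables (T : finType) (e : rel T).

Definition simple_graph := symmetric e /\ irreflexive e.

Definition connected_graph := forall x y : T, connect e x y.

Definition is_cycle (c : seq T) := [/\ uniq c, 3 <= size c & cycle e c].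

(* Edge set of a cyclic sequence, as a symmetric set of ordered pairs. *)
Definition cycle_edges (c : seq T) : {set T * T} :=
  [set p : T * T | ((p.1 \in c) && (next c p.1 == p.2))
                || ((p.2 \in c) && (next c p.2 == p.1))].

Definition at_most_one_cycle :=
  forall c1 c2 : seq T, is_cycle c1 -> is_cycle c2 -> cycle_edges c1 = cycle_edges c2.

Definition pseudotree := [/\ simple_graph, connected_graph & at_most_one_cycle].

Definition independent (A : {set T}) := [forall x in A, forall y in A, ~~ e x y].

(* alpha (P - S): maximum size of an independent set of P avoiding S. *)
Definition alpha_minus (S : {set T}) : nat :=
  \max_(A : {set T} | independent A && [disjoint A & S]) #|A|.

Definition alpha : nat := alpha_minus set0.
End Graph.

From mathcomp Require Import all_boot zify.
Set Implicit Arguments. Unset Strict Implicit. Unset Printing Implicit Defensive.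

(* Call [S] a transversal if it meets every maximum independent set; the hypothesis
   [alpha (P - Z) < alpha P] says that [Z] is one.  Pick a minimal transversal [S]
   inside [Z].  By minimality every [x] in [S] has a maximum independent set [I_x]
   with [I_x :&: S = [set x]].  For distinct [x], [y] in [S], the component of [x] in
   the graph induced on the symmetric difference of [I_x] and [I_y] contains [y]:
   otherwise swapping [I_x] and [I_y] on it yields a maximum independent set avoiding
   [S].  This gives an odd [x]-[y] walk inside [I_x :|: I_y], so three points of [S]
   yield an odd cycle inside [I_x :|: I_y :|: I_z].  With four points, the four
   cycles obtained are all the unique cycle of the pseudotree, hence each of its
   vertices lies in two of the four sets; but an independent set contains fewer than
   half of the vertices of an odd cycle.  So [#|S| <= 3]. *)

Lemma not_uniq_split (T : eqType) (s : seq T) : ~~ uniq s ->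
  exists x s1 s2 s3, s = s1 ++ x :: s2 ++ x :: s3.
Proof.
elim: s => [|y t IH] //= /nandP [/negbNE yt | /IH [x [s1 [s2 [s3 ->]]]]].
  by case/splitPr: yt => s2 s3; exists y, [::], s2, s3.
by exists x, (y :: s1), s2, s3.
Qed.

Lemma card_gt3_four (T : finType) (S : {set T}) : 3 < #|S| ->
  exists a b c d, [/\ [&& a \in S, b \in S, c \in S & d \in S] & uniq [:: a; b; c; d]].
Proof.
rewrite cardE; have := mem_enum S; have := enum_uniq S.
case: (enum S) => [|a [|b [|c [|d s]]]] // Us memS _.
exists a, b, c, d; split; first by rewrite -!memS !inE !eqxx !orbT.
by move: Us; rewrite -[a :: _]/([:: a; b; c; d] ++ s) cat_uniq => /andP[].
Qed.

Lemma card_le3_triple (T : finType) (S : {set T}) : 0 < #|S| -> #|S| <= 3 ->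
  exists u v w, [/\ u \in S, v \in S, w \in S & S \subset [set u; v; w]].
Proof.
rewrite cardE; have := mem_enum S.
case: (enum S) => [|a [|b [|c [|d s]]]] // memS _ _;
  [exists a, a, a | exists a, b, b | exists a, b, c];
  split; rewrite -?memS ?inE ?eqxx ?orbT //; apply/subsetP => v;
  by rewrite -memS !inE ?orbF; do ?case/orP; move/eqP->; rewrite eqxx ?orbT.
Qed.

(* Split the walk at a repeated vertex into two shorter closed walks; one of them is odd. *)
Lemma odd_closed_walk_simple_cycle (T : eqType) (e : rel T) (s : seq T) :
  irreflexive e -> cycle e s -> odd (size s) ->
  exists c, [/\ uniq c, 3 <= size c, cycle e c, odd (size c) & {subset c <= s}].
Proof.
move=> e_irr; have [n] := ubnP (size s); elim: n s => // n IH s lt_s_n cs os.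
have [Us | /not_uniq_split [x [s1 [s2 [s3 def_s]]]]] := boolP (uniq s).
  exists s; split => //; case: s lt_s_n cs os Us => [|x [|y [|z t]]] //=.
  by rewrite e_irr.
have : cycle e (x :: s2 ++ x :: s3 ++ s1).
  by rewrite -(rot_cycle (size s1)) def_s rot_size_cat /= -catA in cs.
rewrite /= rcons_cat /= cat_path /= => /and3P [p1 ex p2].
have c1 : cycle e (x :: s2) by rewrite /= rcons_path p1.
have c2 : cycle e (x :: s3 ++ s1) by [].
have size_s : size s = size (x :: s2) + size (x :: s3 ++ s1).
  by rewrite def_s !size_cat /= !size_cat /=; lia.
have sub1 : {subset x :: s2 <= s}.
  by move=> z; rewrite def_s !(mem_cat, inE) => /orP[] ->; rewrite ?orbT.
have sub2 : {subset x :: s3 ++ s1 <= s}.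
  by move=> z; rewrite def_s !(mem_cat, inE) => /or3P[] ->; rewrite ?orbT.
have [o1 | e1] := boolP (odd (size (x :: s2))).
  have lt1 : size (x :: s2) < n by move: lt_s_n; rewrite size_s /=; lia.
  have [c [? ? ? ? sc]] := IH _ lt1 c1 o1.
  by exists c; split => // z /sc /sub1.
have o2 : odd (size (x :: s3 ++ s1)) by move: os; rewrite size_s oddD (negbTE e1).
have lt2 : size (x :: s3 ++ s1) < n by move: lt_s_n; rewrite size_s /=; lia.
have [c [? ? ? ? sc]] := IH _ lt2 c2 o2.
by exists c; split => // z /sc /sub2.
Qed.

Lemma cycle_edges_subset (T : finType) (c1 c2 : seq T) :
  cycle_edges c1 = cycle_edges c2 -> {subset c1 <= c2}.
Proof.
move=> eq_edges x xc1.
have : (x, next c1 x) \in cycle_edges c1 by rewrite inE /= xc1 eqxx.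
by rewrite eq_edges inE /= => /orP[/andP[] | /andP[yc2 /eqP <-]] //; rewrite mem_next.
Qed.

Section IndependentSets.
Variables (T : finType) (e : rel T).

Lemma independentP (A : {set T}) :
  reflect {in A &, forall x y, ~~ e x y} (independent e A).
Proof.
apply: (iffP forall_inP) => [indA x y xA yA | indA x xA].
  exact: (forall_inP (indA x xA)).
by apply/forall_inP => y; apply: indA.
Qed.

(* The successor map of a cycle permutes its vertices and never maps a vertex of [I]
   into [I]. *)
Lemma independent_odd_cycle_count (c : seq T) (I : {set T}) :
  is_cycle e c -> odd (size c) -> independent e I -> 2 * count (mem I) c < size c.
Proof.
case=> Uc _ cc oc /independentP indI.
have next_perm : perm_eq (map (next c) c) c.
  apply: uniq_perm => //; first by rewrite (map_inj_uniq (can_inj (prev_next Uc))).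
  move=> x; apply/mapP/idP => [[y yc ->] | xc]; first by rewrite mem_next.
  by exists (prev c x); rewrite ?mem_prev ?next_prev.
have no_edge : count (predI (mem I) (preim (next c) (mem I))) c = 0.
  apply/eqP; rewrite -leqn0 leqNgt -has_count; apply/hasPn => v vc /=.
  by apply/andP => -[vI nI]; have := indI _ _ vI nI; rewrite next_cycle.
have le_c : 2 * count (mem I) c <= size c.
  rewrite mul2n -addnn -{2}(permP next_perm) count_map -count_predUI no_edge addn0.
  exact: count_size.
by rewrite ltn_neqAle le_c andbT; apply: contraTneq oc => <-; rewrite mul2n odd_double.
Qed.

Lemma odd_cycle_multicover (Is : seq {set T}) (c : seq T) (m : nat) :
  0 < m -> is_cycle e c -> odd (size c) -> all (independent e) Is ->
  {in c, forall v, m <= count (fun I : {set T} => v \in I) Is} -> 2 * m < size Is.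
Proof.
move=> m_gt0 cyc oc /allP indIs cover.
have c_gt0 : 0 < size c by case: cyc => _ + _; apply: leq_trans.
have count_sum (J : Type) (a : pred J) r : count a r = \sum_(j <- r) a j.
  by rewrite -sum1_count big_mkcond.
have sum_const (J : eqType) (r : seq J) k : \sum_(j <- r) k = size r * k.
  by rewrite big_const_seq count_predT iter_addn_0 mulnC.
have lower : m * size c <= \sum_(I <- Is) count (mem I) c.
  under eq_bigr do rewrite count_sum.
  rewrite exchange_big /= mulnC -sum_const [leqLHS]big_seq [leqRHS]big_seq.
  by apply: leq_sum => v vc; rewrite -count_sum cover.
have upper : 2 * \sum_(I <- Is) count (mem I) c <= size Is * (size c).-1.
  rewrite big_distrr /= -sum_const [leqLHS]big_seq [leqRHS]big_seq.
  by apply: leq_sum => I IIs; rewrite -ltnS prednK ?independent_odd_cycle_count ?indIs.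
nia.
Qed.

End IndependentSets.

Section MaximumIndependentSets.
Variables (T : finType) (e : rel T).

Definition max_indep (A : {set T}) := independent e A && (#|A| == alpha e).

Definition meets_max_indep (S : {set T}) :=
  [forall A, max_indep A ==> ~~ [disjoint A & S]].

Lemma disjoint_set0 (A : {set T}) : [disjoint A & set0].
Proof. by rewrite -setI_eq0 setI0. Qed.

Lemma independent_le_alpha (A : {set T}) : independent e A -> #|A| <= alpha e.
Proof.
move=> indA; rewrite /alpha /alpha_minus.
by apply: (leq_bigmax_cond (F := fun B : {set T} => #|B|)); rewrite indA disjoint_set0.
Qed.

Lemma exists_max_indep : exists A, max_indep A.
Proof.
have : 0 < #|[pred A : {set T} | independent e A && [disjoint A & set0]]|.
  apply/card_gt0P; exists set0; rewrite inE disjoint_set0 andbT.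
  by apply/forall_inP => x; rewrite inE.
case/(eq_bigmax_cond (fun A : {set T} => #|A|)) => A; rewrite inE => /andP[indA _] cardA.
exists A; rewrite /max_indep indA /alpha /alpha_minus -cardA /=.
by apply/eqP/eq_bigl => B; rewrite inE.
Qed.

Lemma meets_max_indepP (S : {set T}) :
  reflect (forall A, max_indep A -> exists2 x, x \in A & x \in S) (meets_max_indep S).
Proof.
apply: (iffP forallP) => [meetS A maxA | meetS A].
  move/implyP: (meetS A) => /(_ maxA); rewrite -setI_eq0 => /set0Pn[x].
  by rewrite inE => /andP[]; exists x.
apply/implyP => /meetS[x xA xS]; rewrite -setI_eq0; apply/set0Pn.
by exists x; rewrite inE xA.
Qed.

Lemma meets_max_indepS (S S' : {set T}) :
  S \subset S' -> meets_max_indep S -> meets_max_indep S'.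
Proof.
move=> sSS' /meets_max_indepP meetS; apply/meets_max_indepP => A /meetS[x xA xS].
by exists x; rewrite ?(subsetP sSS').
Qed.

Lemma alpha_minus_lt_alpha (S : {set T}) :
  (alpha_minus e S < alpha e) = meets_max_indep S.
Proof.
apply/idP/meets_max_indepP => [lt_S A /andP[indA /eqP cardA] | meetS].
  have [AS0 | [x]] := set_0Vmem (A :&: S); last by rewrite inE => /andP[]; exists x.
  move: lt_S; rewrite -cardA ltnNge /alpha_minus.
  by rewrite (leq_bigmax_cond (F := fun B : {set T} => #|B|)) // indA -setI_eq0 AS0 eqxx.
have [A0 maxA0] := exists_max_indep; have [x xA0 _] := meetS _ maxA0.
have alpha_gt0 : 0 < alpha e.
  by case/andP: maxA0 => _ /eqP <-; apply/card_gt0P; exists x.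
rewrite -(prednK alpha_gt0) ltnS; apply/bigmax_leqP => A /andP[indA disjAS].
rewrite -ltnS prednK // ltn_neqAle independent_le_alpha // andbT.
apply/eqP => cardA; have /meetS[y yA yS] : max_indep A by rewrite /max_indep indA cardA eqxx.
by move: disjAS; rewrite -setI_eq0 => /eqP/setP/(_ y); rewrite !inE yA yS.
Qed.

Lemma meets_max_indep_card_gt0 (S : {set T}) : meets_max_indep S -> 0 < #|S|.
Proof.
have [A maxA] := exists_max_indep.
by move/meets_max_indepP/(_ A maxA) => [x _ xS]; apply/card_gt0P; exists x.
Qed.

Lemma exists_minimal_transversal (Z : {set T}) : meets_max_indep Z ->
  exists2 S : {set T}, S \subset Z &
    meets_max_indep S /\ forall x, x \in S -> ~~ meets_max_indep (S :\ x).
Proof.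
move=> meetZ.
have PZ : [pred S : {set T} | (S \subset Z) && meets_max_indep S] Z by rewrite /= subxx.
case: (arg_minnP (fun S : {set T} => #|S|) PZ) => S /andP[SZ meetS] minS.
exists S => //; split => // x xS; apply/negP => meetSx.
have := minS (S :\ x); rewrite /= (subset_trans (subD1set S x) SZ) meetSx.
by rewrite (cardsD1 x S) xS add1n ltnn => /(_ isT).
Qed.

End MaximumIndependentSets.

Section OddWalks.
Variables (T : finType) (e : rel T).

Definition odd_walk (A : {set T}) (x y : T) :=
  exists p, [/\ path e x p, last x p = y, odd (size p) & {subset x :: p <= A}].

Lemma odd_walk_triangle (A B C : {set T}) x y z :
  irreflexive e -> odd_walk A x y -> odd_walk B y z -> odd_walk C z x ->
  exists c, [/\ is_cycle e c, odd (size c) & {subset c <= A :|: B :|: C}].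
Proof.
move=> e_irr [p1 [path1 last1 odd1 sub1]] [p2 [path2 last2 odd2 sub2]]
  [p3 [path3 last3 odd3 sub3]].
have path_q : path e x (p1 ++ p2 ++ p3) by rewrite !cat_path path1 last1 path2 last2.
have last_q : last x (p1 ++ p2 ++ p3) = x by rewrite !last_cat last1 last2.
have odd_q : odd (size (p1 ++ p2 ++ p3)) by rewrite !size_cat !oddD odd1 odd2 odd3.
have sub_q : {subset x :: p1 ++ p2 ++ p3 <= A :|: B :|: C}.
  move=> v; rewrite inE !mem_cat !inE => /or4P[/eqP-> | vp1 | vp2 | vp3].
  - by rewrite (sub1 x) ?mem_head.
  - by rewrite (sub1 v) ?inE ?vp1 ?orbT.
  - by rewrite (sub2 v) ?inE ?vp2 ?orbT.
  - by rewrite (sub3 v) ?inE ?vp3 ?orbT.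
move: path_q last_q odd_q sub_q; case/lastP: (p1 ++ p2 ++ p3) => // r w.
rewrite last_rcons size_rcons => path_r w_x odd_r sub_r; subst w.
have cyc_r : cycle e (x :: r) by [].
have [c [Uc c_ge3 cyc_c odd_c sub_c]] :=
  odd_closed_walk_simple_cycle e_irr cyc_r odd_r.
exists c; split => // v /sub_c; rewrite inE => /predU1P[-> | vr]; apply: sub_r.
  exact: mem_head.
by rewrite !(inE, mem_rcons) vr !orbT.
Qed.

End OddWalks.

Section AlternatingPaths.
Variables (T : finType) (e : rel T).
Hypothesis e_sym : symmetric e.

Definition symdiff (A B : {set T}) := (A :\: B) :|: (B :\: A).

Definition alt_rel (I K : {set T}) :=
  [rel u v | [&& e u v, u \in symdiff I K & v \in symdiff I K]].

Lemma symdiffC (A B : {set T}) : symdiff A B = symdiff B A.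
Proof. exact: setUC. Qed.

Lemma alt_rel_sym (I K : {set T}) : symmetric (alt_rel I K).
Proof. by move=> u v; rewrite /= e_sym [(u \in _) && _]andbC. Qed.

(* An edge between [I :\: X] and [X :&: K] is an edge of the alternating graph. *)
Lemma swap_independent (I K X : {set T}) :
  independent e I -> independent e K -> closed (alt_rel I K) X ->
  independent e ((I :\: X) :|: (X :&: K)).
Proof.
move=> /independentP indI /independentP indK closedX.
have cross x y : x \in I -> x \notin X -> y \in X -> y \in K -> ~~ e x y.
  move=> xI xX yX yK; apply/negP => exy.
  have xK : x \notin K by apply: contraTN exy => xK; apply: indK.
  have yI : y \notin I by apply: contraTN exy => yI; apply: indI.
  have : alt_rel I K x y by rewrite /= exy !inE xI xK yI yK.
  by move/closedX; rewrite (negbTE xX) yX.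
apply/independentP => x y; rewrite !inE.
case/orP=> [/andP[xX xI] | /andP[xX xK]]; case/orP=> [/andP[yX yI] | /andP[yX yK]].
- exact: indI.
- exact: cross.
- by rewrite e_sym; apply: cross.
- exact: indK.
Qed.

Lemma swap_max_indep (I K X : {set T}) :
  max_indep e I -> max_indep e K -> closed (alt_rel I K) X ->
  max_indep e ((I :\: X) :|: (X :&: K)).
Proof.
move=> /andP[indI /eqP cardI] /andP[indK /eqP cardK] closedX.
have closedX' : closed (alt_rel K I) X by rewrite /alt_rel symdiffC.
have indIK := swap_independent indI indK closedX.
have indKI := swap_independent indK indI closedX'.
have card_swap (A B : {set T}) : #|(A :\: X) :|: (X :&: B)| = #|A :\: X| + #|X :&: B|.
  rewrite cardsU; suff -> : (A :\: X) :&: (X :&: B) = set0 by rewrite cards0 subn0.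
  by apply/setP => z; rewrite !inE; case: (z \in X); rewrite ?andbF.
have := independent_le_alpha indIK; have := independent_le_alpha indKI.
have := cardsID X I; have := cardsID X K.
rewrite (setIC I) (setIC K) cardI cardK !card_swap => *.
by rewrite /max_indep indIK card_swap /=; apply/eqP; lia.
Qed.

Lemma alt_path_symdiff (I K : {set T}) x p :
  path (alt_rel I K) x p -> {subset p <= symdiff I K}.
Proof.
elim: p x => [|y q IHq] x //= /andP[/and3P[_ _ yIK] pathq] z.
by rewrite inE => /predU1P[-> // | zq]; apply: IHq pathq _ zq.
Qed.

(* Each edge of the alternating graph joins [I :\: K] to [K :\: I]. *)
Lemma alt_path_parity (I K : {set T}) x p :
  independent e I -> independent e K -> path (alt_rel I K) x p ->
  (last x p \in I) = (x \in I) (+) odd (size p).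
Proof.
move=> /independentP indI /independentP indK.
elim: p x => [|y q IHq] x /=; first by rewrite addbF.
case/andP=> /and3P[exy xIK yIK] pathq; rewrite IHq //.
suff -> : (y \in I) = ~~ (x \in I) by case: (x \in I); case: (odd _).
move: xIK yIK; rewrite !inE.
case xI: (x \in I); case yI: (y \in I) => //=; rewrite ?andbF ?orbF => xK yK.
  by have := indI _ _ xI yI; rewrite exy.
by have := indK _ _ xK yK; rewrite exy.
Qed.

Lemma alt_connect_odd_walk (I K : {set T}) x y :
  independent e I -> independent e K -> x \in I -> y \notin I ->
  connect (alt_rel I K) x y -> odd_walk e (I :|: K) x y.
Proof.
move=> indI indK xI yI /connectP[p path_p y_last]; exists p; split.
- by apply: sub_path path_p => u v /andP[].
- by rewrite y_last.
- move: (alt_path_parity indI indK path_p).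
  by rewrite -y_last (negbTE yI) xI => /esym/negbFE.
- move=> z /predU1P[-> | /(alt_path_symdiff path_p)]; first by rewrite inE xI.
  by rewrite !inE => /orP[] /andP[_ ->]; rewrite ?orbT.
Qed.

End AlternatingPaths.

Section MinimalTransversal.
Variables (T : finType) (e : rel T).
Hypothesis e_sym : symmetric e.

Variable S : {set T}.
Hypothesis meetS : meets_max_indep e S.

Lemma private_odd_walk (I K : {set T}) x y :
  max_indep e I -> max_indep e K -> I :&: S = [set x] -> K :&: S = [set y] ->
  x != y -> odd_walk e (I :|: K) x y.
Proof.
move=> maxI maxK IS KS xy.
have inS (A : {set T}) z t : A :&: S = [set z] -> (t \in A) && (t \in S) = (t == z).
  by move/setP/(_ t); rewrite !inE.
have [xI xS] : x \in I /\ x \in S by apply/andP; rewrite (inS _ _ _ IS) eqxx.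
have [yK yS] : y \in K /\ y \in S by apply/andP; rewrite (inS _ _ _ KS) eqxx.
have yI : y \notin I by apply: contra xy => yI; rewrite eq_sym -(inS _ _ y IS) yI.
have [indI _] := andP maxI; have [indK _] := andP maxK.
have [//|x_y] := boolP (connect (alt_rel e I K) x y); first exact: alt_connect_odd_walk.
pose X := [set z | connect (alt_rel e I K) x z].
have closedX : closed (alt_rel e I K) X.
  move=> u v uv; rewrite !inE.
  by apply: connect_closed uv; apply/sym_connect_sym/alt_rel_sym.
have [z] : exists2 z, z \in (I :\: X) :|: (X :&: K) & z \in S.
  by apply: (elimT (meets_max_indepP _ _) meetS); apply: swap_max_indep.
rewrite !inE => /orP[/andP[xz zI] | /andP[xz zK]] zS.
- have /eqP z_x : z == x by rewrite -(inS _ _ z IS) zI.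
  by rewrite z_x connect0 in xz.
- have /eqP z_y : z == y by rewrite -(inS _ _ z KS) zK.
  by rewrite -z_y xz in x_y.
Qed.

Hypothesis minS : forall x, x \in S -> ~~ meets_max_indep e (S :\ x).

Lemma exists_private_max_indep x :
  x \in S -> exists2 I, max_indep e I & I :&: S = [set x].
Proof.
move=> xS; have /forallPn[A] := minS xS; rewrite negb_imply negbK => /andP[maxA disjA].
have only_x z : z \in A -> z \in S -> z = x.
  move=> zA zS; apply/eqP; apply: contraTT disjA => zx.
  by rewrite -setI_eq0; apply/set0Pn; exists z; rewrite !inE zA zS zx.
have [t tA tS] := elimT (meets_max_indepP _ _) meetS A maxA.
exists A => //; apply/setP => z; rewrite !inE.
apply/andP/eqP => [[zA zS] | ->]; first exact: only_x.
by rewrite -(only_x t tA tS).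
Qed.

Hypothesis e_irr : irreflexive e.

Lemma private_odd_cycle (Ix Iy Iz : {set T}) x y z :
  uniq [:: x; y; z] -> max_indep e Ix -> max_indep e Iy -> max_indep e Iz ->
  Ix :&: S = [set x] -> Iy :&: S = [set y] -> Iz :&: S = [set z] ->
  exists c, [/\ is_cycle e c, odd (size c) & {subset c <= Ix :|: Iy :|: Iz}].
Proof.
rewrite /= !inE negb_or andbT => /andP[/andP[xy xz] yz] maxIx maxIy maxIz IxS IyS IzS.
have zx : z != x by rewrite eq_sym.
have [c [cyc_c odd_c sub_c]] := odd_walk_triangle e_irr
  (private_odd_walk maxIx maxIy IxS IyS xy) (private_odd_walk maxIy maxIz IyS IzS yz)
  (private_odd_walk maxIz maxIx IzS IxS zx).
exists c; split => // v /sub_c; rewrite !inE.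
by case/orP=> [/orP[] | ] /orP[] ->; rewrite ?orbT.
Qed.

Hypothesis one_cycle : at_most_one_cycle e.

Lemma minimal_transversal_card_le3 : #|S| <= 3.
Proof.
rewrite leqNgt; apply/negP => /card_gt3_four[a [b [c [d [/and4P[aS bS cS dS] Uabcd]]]]].
have [Ia maxIa IaS] := exists_private_max_indep aS.
have [Ib maxIb IbS] := exists_private_max_indep bS.
have [Ic maxIc IcS] := exists_private_max_indep cS.
have [Id maxId IdS] := exists_private_max_indep dS.
move: Uabcd; rewrite /= !inE !negb_or andbT => /and3P[/and3P[ab ac ad] /andP[bc bd] cd].
have uniq3 (x y z : T) : x != y -> x != z -> y != z -> uniq [:: x; y; z].
  by move=> xy xz yz; rewrite /= !inE negb_or xy xz yz.
have [C [cycC oddC subC]] :=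
  private_odd_cycle (uniq3 a b c ab ac bc) maxIa maxIb maxIc IaS IbS IcS.
have [C2 [cycC2 _ subC2]] :=
  private_odd_cycle (uniq3 a b d ab ad bd) maxIa maxIb maxId IaS IbS IdS.
have [C3 [cycC3 _ subC3]] :=
  private_odd_cycle (uniq3 a c d ac ad cd) maxIa maxIc maxId IaS IcS IdS.
have [C4 [cycC4 _ subC4]] :=
  private_odd_cycle (uniq3 b c d bc bd cd) maxIb maxIc maxId IbS IcS IdS.
have inC (C' : seq T) : is_cycle e C' -> {subset C <= C'}.
  by move=> cycC'; apply: cycle_edges_subset; apply: one_cycle.
have indep (I : {set T}) : max_indep e I -> independent e I by case/andP.
suff : 2 * 2 < size [:: Ia; Ib; Ic; Id] by [].
apply: (odd_cycle_multicover (m := 2) isT cycC oddC); first by rewrite /= !indep.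
move=> v vC; move: (subC v vC) (subC2 v (inC _ cycC2 v vC))
  (subC3 v (inC _ cycC3 v vC)) (subC4 v (inC _ cycC4 v vC)); rewrite !inE /=.
by case: (v \in Ia); case: (v \in Ib); case: (v \in Ic); case: (v \in Id).
Qed.

End MinimalTransversal.

Theorem lemma4 (T : finType) (e : rel T) (Z : {set T}) :
  pseudotree e ->
  alpha_minus e Z < alpha e ->
  exists u v w : T, [/\ u \in Z, v \in Z, w \in Z &
    alpha_minus e [set u; v; w] < alpha e].
Proof.
case=> [[e_sym e_irr] _ one_cycle]; rewrite alpha_minus_lt_alpha => meetZ.
have [S SZ [meetS minS]] := exists_minimal_transversal meetZ.
have card_le3 := minimal_transversal_card_le3 e_sym meetS minS e_irr one_cycle.
have [u [v [w [uS vS wS Suvw]]]] := card_le3_triple (meets_max_indep_card_gt0 meetS) card_le3.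
exists u, v, w; split; try exact: (subsetP SZ).
by rewrite alpha_minus_lt_alpha (meets_max_indepS Suvw meetS).
Qed.
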